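(* Let $\bar\lambda\in(0,\infty)^k$ be a tuning parameter satisfying $\bar\lambda_j/(2g'(\|Y-X\hat\beta^{\bar\lambda}\|_2^2))=\|(XP_jM_j^{+})^\top\varepsilon\|_{q_j}^*$ for all $j$, and let $\bar\beta:=\hat\beta^{\bar\lambda}$. Then, with probability one, $$\frac1n\|X(\beta^*-\bar\beta)\|_2^2\le\min_{\beta\in\mathbb{R}^p}\Big\{\frac1n\|X(\beta^*-\beta)\|_2^2+\frac4n\sum_{j=1}^k\|(XP_jM_j^{+})^\top\varepsilon\|_{q_j}^*\,\|M_j\beta\|_{q_j}\Big\}.$$
   Context: Standing setup. Model: $Y=X\beta^*+\varepsilon$ with $Y\in\mathbb{R}^n$, $X\in\mathbb{R}^{n\times p}$, $\beta^*\in\mathbb{R}^p$, $\varepsilon\in\mathbb{R}^n$ (random). Link function $g:\mathbb{R}\to[0,\infty)$ with $g(0)=0$, $g$ continuous and strictly increasing on $[0,\infty)$, continuously differentiable on $(0,\infty)$ with strictly positive and non-increasing derivative $g'$, and such that $\alpha\mapsto g(\|\alpha\|_2^2)$ is strictly convex on $\mathbb{R}^n$. Penalty: $k\ge1$, matrices $M_1,\dots,M_k\in\mathbb{R}^{p\times p}$ with $\bigcap_{j=1}^k\mathrm{Ker}(M_j)=\{0\}$, exponents $q_j\ge1$, $\|\cdot\|_{q_j}$ the $\ell_{q_j}$-norm on $\mathbb{R}^p$, and $\|\cdot\|_{q_j}^*$ its dual norm. For $\lambda\in(0,\infty)^k$, $\hat\beta^\lambda$ denotes any element of $\arg\min_{\beta\in\mathbb{R}^p}\{g(\|Y-X\beta\|_2^2)+\sum_{j=1}^k\lambda_j\|M_j\beta\|_{q_j}\}$.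 $A^+$ denotes the Moore–Penrose pseudoinverse; $P_1,\dots,P_k\in\mathbb{R}^{p\times p}$ are fixed projection matrices with $\sum_{j=1}^kP_jM_j^+M_j=I_{p\times p}$. Noise assumption: with probability one, $Y\neq0$ and $\min_{j}\|(XP_jM_j^{+})^\top\varepsilon\|_{q_j}^*>0$. *)

From Stdlib Require Import Reals Lra.
Open Scope R_scope.

(* Vectors are functions nat -> R (only indices < dimension matter);
   matrices are functions nat -> nat -> R. *)
Definition vec := nat -> R.
Definition mat := nat -> nat -> R.

Fixpoint sumR (m : nat) (f : nat -> R) : R :=
  match m with O => 0 | S m' => sumR m' f + f m' end.

Definition mv (c : nat) (A : mat) (x : vec) : vec :=
  fun i => sumR c (fun j => A i j * x j).
Definition mm (c : nat) (A B : mat) : mat :=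
  fun i j => sumR c (fun l => A i l * B l j).
Definition tr (A : mat) : mat := fun i j => A j i.
Definition vsub (x y : vec) : vec := fun i => x i - y i.

Definition sqnorm (m : nat) (x : vec) : R := sumR m (fun i => x i ^ 2).
Definition dot (m : nat) (x y : vec) : R := sumR m (fun i => x i * y i).

(* a^b for a >= 0, with 0^b = 0 (b > 0 in all uses) *)
Definition rpow (a b : R) : R := if Req_EM_T a 0 then 0 else Rpower a b.

Definition lqnorm (q : R) (m : nat) (x : vec) : R :=
  rpow (sumR m (fun i => rpow (Rabs (x i)) q)) (1 / q).

Definition is_dualnorm (q : R) (m : nat) (u : vec) (d : R) : Prop :=
  is_lub (fun t => exists v : vec, lqnorm q m v <= 1 /\ t = dot m u v) d.

Definition meq (m c : nat) (A B : mat) : Prop :=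
  forall i j, (i < m)%nat -> (j < c)%nat -> A i j = B i j.
Definition veq (m : nat) (x y : vec) : Prop := forall i, (i < m)%nat -> x i = y i.

Definition idmat : mat := fun i j => if Nat.eqb i j then 1 else 0.

Definition is_pinv (p : nat) (A B : mat) : Prop :=
  meq p p (mm p (mm p A B) A) A /\
  meq p p (mm p (mm p B A) B) B /\
  meq p p (tr (mm p A B)) (mm p A B) /\
  meq p p (tr (mm p B A)) (mm p B A).

Definition is_projection (p : nat) (P : mat) : Prop := meq p p (mm p P P) P.

Definition link_function (n : nat) (g gp : R -> R) : Prop :=
  g 0 = 0 /\
  (forall x, 0 <= g x) /\
  (forall x, 0 <= x -> forall eps, eps > 0 -> exists delta, delta > 0 /\
      forall y, 0 <= y -> Rabs (y - x) < delta -> Rabs (g y - g x) < eps) /\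
  (forall x y, 0 <= x -> x < y -> g x < g y) /\
  (forall x, 0 < x -> derivable_pt_lim g x (gp x)) /\
  (forall x, 0 < x -> forall eps, eps > 0 -> exists delta, delta > 0 /\
      forall y, 0 < y -> Rabs (y - x) < delta -> Rabs (gp y - gp x) < eps) /\
  (forall x, 0 < x -> 0 < gp x) /\
  (forall x y, 0 < x -> x <= y -> gp y <= gp x) /\
  (forall a b : vec, ~ veq n a b -> forall t, 0 < t < 1 ->
     g (sqnorm n (fun i => t * a i + (1 - t) * b i))
       < t * g (sqnorm n a) + (1 - t) * g (sqnorm n b)).

Definition objective (n p k : nat) (g : R -> R) (X : mat) (Y : vec)
  (M : nat -> mat) (q : nat -> R) (lam : nat -> R) (b : vec) : R :=
  g (sqnorm n (vsub Y (mv p X b))) + sumR k (fun j => lam j * lqnorm (q j) p (mv p (M j) b)).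

Definition noisevec (n p : nat) (X P Mp : mat) (eps : vec) : vec :=
  mv n (tr (mm p (mm p X P) Mp)) eps.

(** By minimality of [betabar] and concavity of [g] (its derivative is
    non-increasing), the residual sum of squares at [betabar] exceeds the one
    at any [beta] by at most [2 sum_j d_j (||M_j beta|| - ||M_j betabar||)],
    thanks to the tuning [lambar_j = 2 g'(.) d_j].  Expanding both residuals
    around [Y = X betastar + eps] leaves the cross term
    [<eps, X (beta - betabar)> = sum_j <(X P_j M_j^+)^T eps, M_j (beta - betabar)>]
    (because [sum_j P_j M_j^+ M_j = I]), which the dual-norm inequality bounds
    by [sum_j d_j (||M_j beta|| + ||M_j betabar||)]; adding up gives the
    constant 4. *)

From Stdlib Require Import Reals Lra Lia.
Open Scope R_scope.

Lemma sumR_ext m f h : (forall i, (i < m)%nat -> f i = h i) -> sumR m f = sumR m h.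
Proof.
  induction m as [|m IH]; intros Hfh; simpl; [reflexivity|].
  rewrite IH, Hfh; auto with arith.
Qed.

Lemma sumR_const0 m : sumR m (fun _ => 0) = 0.
Proof. induction m as [|m IH]; simpl; [|rewrite IH]; ring. Qed.

Lemma sumR_plus m f h : sumR m (fun i => f i + h i) = sumR m f + sumR m h.
Proof. induction m as [|m IH]; simpl; [|rewrite IH]; ring. Qed.

Lemma sumR_minus m f h : sumR m (fun i => f i - h i) = sumR m f - sumR m h.
Proof. induction m as [|m IH]; simpl; [|rewrite IH]; ring. Qed.

Lemma sumR_scal m c f : sumR m (fun i => c * f i) = c * sumR m f.
Proof. induction m as [|m IH]; simpl; [|rewrite IH]; ring. Qed.

Lemma sumR_scalr m c f : sumR m (fun i => f i * c) = sumR m f * c.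
Proof. induction m as [|m IH]; simpl; [|rewrite IH]; ring. Qed.

Lemma sumR_le m f h : (forall i, (i < m)%nat -> f i <= h i) -> sumR m f <= sumR m h.
Proof.
  induction m as [|m IH]; intros Hfh; simpl; [lra|].
  apply Rplus_le_compat; auto with arith.
Qed.

Lemma sumR_nonneg m f : (forall i, (i < m)%nat -> 0 <= f i) -> 0 <= sumR m f.
Proof. intros Hf; rewrite <- (sumR_const0 m); now apply sumR_le. Qed.

Lemma sumR_eq0_nonneg m f :
  (forall i, (i < m)%nat -> 0 <= f i) -> sumR m f = 0 ->
  forall i, (i < m)%nat -> f i = 0.
Proof.
  induction m as [|m IH]; simpl; intros Hf Hsum i Hi; [lia|].
  assert (Hrest : 0 <= sumR m f) by (apply sumR_nonneg; auto with arith).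
  assert (Hlast : 0 <= f m) by auto with arith.
  destruct (Nat.eq_dec i m) as [->|Hne]; [lra|].
  apply IH; auto with arith; [lra | lia].
Qed.

Lemma sumR_exchange m l (f : nat -> nat -> R) :
  sumR m (fun i => sumR l (fun j => f i j)) = sumR l (fun j => sumR m (fun i => f i j)).
Proof.
  induction m as [|m IH]; simpl.
  - now rewrite sumR_const0.
  - now rewrite IH, <- sumR_plus.
Qed.

Lemma sumR_idmat p v a : (a < p)%nat -> sumR p (fun b => idmat a b * v b) = v a.
Proof.
  induction p as [|p IH]; simpl; intros Ha; [lia|].
  unfold idmat at 2; destruct (Nat.eqb_spec a p) as [->|Hne].
  - rewrite (sumR_ext _ _ (fun _ => 0)), sumR_const0; [ring|].
    intros i Hi; unfold idmat; destruct (Nat.eqb_spec p i); [lia | ring].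
  - rewrite IH by lia; ring.
Qed.

Lemma mv_ext c A x y i : veq c x y -> mv c A x i = mv c A y i.
Proof. intros Hxy; apply sumR_ext; intros j Hj; now rewrite Hxy. Qed.

Lemma mv_vsub c A x y i : mv c A (vsub x y) i = mv c A x i - mv c A y i.
Proof. unfold mv, vsub; rewrite <- sumR_minus; apply sumR_ext; intros; ring. Qed.

Lemma mv_mm c c' A B x i : mv c (mm c' A B) x i = mv c' A (mv c B x) i.
Proof.
  unfold mv, mm.
  transitivity (sumR c (fun j => sumR c' (fun l => A i l * (B l j * x j)))).
  - apply sumR_ext; intros; rewrite <- sumR_scalr; apply sumR_ext; intros; ring.
  - rewrite sumR_exchange; apply sumR_ext; intros; now rewrite <- sumR_scal.
Qed.

Lemma mv_sumR c A k (f : nat -> vec) i :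
  mv c A (fun a => sumR k (fun j => f j a)) i = sumR k (fun j => mv c A (f j) i).
Proof.
  unfold mv; rewrite <- sumR_exchange.
  apply sumR_ext; intros; now rewrite <- sumR_scal.
Qed.

Lemma dot_mv_tr n p Z e w : dot n e (mv p Z w) = dot p (mv n (tr Z) e) w.
Proof.
  unfold dot, mv, tr.
  transitivity (sumR n (fun i => sumR p (fun a => e i * Z i a * w a))).
  - apply sumR_ext; intros; rewrite <- sumR_scal; apply sumR_ext; intros; ring.
  - rewrite sumR_exchange; apply sumR_ext; intros.
    rewrite <- sumR_scalr; apply sumR_ext; intros; ring.
Qed.

Lemma sqnorm_add n e a :
  sqnorm n (fun i => e i + a i) = sqnorm n e + 2 * dot n e a + sqnorm n a.
Proof.
  unfold sqnorm, dot; rewrite <- sumR_scal, <- !sumR_plus.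
  apply sumR_ext; intros; ring.
Qed.

Lemma sqnorm_nonneg n x : 0 <= sqnorm n x.
Proof. apply sumR_nonneg; intros; apply pow2_ge_0. Qed.

Lemma vec_decomp p k (M Mp P : nat -> mat) v :
  meq p p (fun a b => sumR k (fun j => mm p (mm p (P j) (Mp j)) (M j) a b)) idmat ->
  veq p v (fun a => sumR k (fun j => mv p (mm p (mm p (P j) (Mp j)) (M j)) v a)).
Proof.
  intros HPsum a Ha; unfold mv; rewrite sumR_exchange, <- (sumR_idmat p v a Ha).
  apply sumR_ext; intros b Hb; now rewrite sumR_scalr, <- (HPsum a b Ha Hb).
Qed.

Lemma dot_noisevec_decomp n p k X (M Mp P : nat -> mat) eps v :
  meq p p (fun a b => sumR k (fun j => mm p (mm p (P j) (Mp j)) (M j) a b)) idmat ->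
  dot n eps (mv p X v)
  = sumR k (fun j => dot p (noisevec n p X (P j) (Mp j) eps) (mv p (M j) v)).
Proof.
  intros HPsum; unfold noisevec.
  rewrite (sumR_ext _ _ (fun j => dot n eps (mv p (mm p (mm p X (P j)) (Mp j)) (mv p (M j) v))))
    by (intros; symmetry; apply dot_mv_tr).
  unfold dot; rewrite <- sumR_exchange.
  apply sumR_ext; intros i Hi; rewrite sumR_scal; f_equal.
  rewrite (mv_ext p X _ _ i (vec_decomp p k M Mp P v HPsum)), mv_sumR.
  apply sumR_ext; intros j Hj.
  rewrite !mv_mm; apply mv_ext; intros a Ha; now rewrite !mv_mm.
Qed.

Lemma rpow_nonneg a b : 0 <= rpow a b.
Proof. unfold rpow, Rpower; destruct (Req_EM_T a 0); [lra | left; apply exp_pos]. Qed.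

Lemma rpow_neq0 a b : a <> 0 -> rpow a b = Rpower a b.
Proof. unfold rpow; now destruct (Req_EM_T a 0). Qed.

Lemma rpow_0_l b : rpow 0 b = 0.
Proof. unfold rpow; destruct (Req_EM_T 0 0); lra. Qed.

Lemma rpow_eq0 a b : rpow a b = 0 -> a = 0.
Proof.
  intros Hab; destruct (Req_EM_T a 0) as [|Ha]; [assumption|].
  rewrite rpow_neq0 in Hab by assumption.
  pose proof (exp_pos (b * ln a)); unfold Rpower in Hab; lra.
Qed.

Lemma rpow_mult c a b : 0 < c -> 0 <= a -> rpow (c * a) b = Rpower c b * rpow a b.
Proof.
  intros Hc Ha; destruct (Req_dec a 0) as [->|Ha0].
  - now rewrite Rmult_0_r, rpow_0_l, Rmult_0_r.
  - rewrite !rpow_neq0 by (try apply Rmult_integral_contrapositive; lra).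
    symmetry; apply Rpower_mult_distr; lra.
Qed.

Lemma lqnorm_nonneg q m w : 0 <= lqnorm q m w.
Proof. apply rpow_nonneg. Qed.

Lemma lqnorm_opp q m w : lqnorm q m (fun i => - w i) = lqnorm q m w.
Proof. unfold lqnorm; f_equal; apply sumR_ext; intros; now rewrite Rabs_Ropp. Qed.

Lemma lqnorm_scal q m c w : 0 < q -> 0 < c ->
  lqnorm q m (fun i => c * w i) = c * lqnorm q m w.
Proof.
  intros Hq Hc; unfold lqnorm.
  rewrite (sumR_ext _ _ (fun i => Rpower c q * rpow (Rabs (w i)) q)).
  - rewrite sumR_scal, rpow_mult, Rpower_mult;
      [| apply exp_pos | apply sumR_nonneg; intros; apply rpow_nonneg].
    replace (q * (1 / q)) with 1 by (field; lra).
    now rewrite Rpower_1.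
  - intros i Hi; rewrite Rabs_mult, (Rabs_pos_eq c) by lra.
    apply rpow_mult; [lra | apply Rabs_pos].
Qed.

Lemma lqnorm_eq0 q m w : lqnorm q m w = 0 -> forall i, (i < m)%nat -> w i = 0.
Proof.
  intros Hw i Hi; destruct (Req_dec (w i) 0) as [|Hne]; [assumption|].
  exfalso; apply (Rabs_no_R0 _ Hne), (rpow_eq0 _ q).
  refine (sumR_eq0_nonneg m _ _ (rpow_eq0 _ _ Hw) i Hi).
  intros; apply rpow_nonneg.
Qed.

Lemma dot_ext m u x y : veq m x y -> dot m u x = dot m u y.
Proof. intros Hxy; apply sumR_ext; intros i Hi; now rewrite Hxy. Qed.

Lemma dot_scalr m u c w : dot m u (fun i => c * w i) = c * dot m u w.
Proof. unfold dot; rewrite <- sumR_scal; apply sumR_ext; intros; ring. Qed.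

Lemma dot_eq0_r m u w : (forall i, (i < m)%nat -> w i = 0) -> dot m u w = 0.
Proof.
  intros Hw; unfold dot; rewrite <- (sumR_const0 m).
  apply sumR_ext; intros i Hi; rewrite Hw by assumption; ring.
Qed.

Lemma dualnorm_nonneg q m u d : is_dualnorm q m u d -> 0 <= d.
Proof.
  intros [Hub _]; apply Hub; exists (fun _ => 0); split.
  - unfold lqnorm; rewrite (sumR_ext _ _ (fun _ => 0)), sumR_const0, rpow_0_l; [lra|].
    intros; now rewrite Rabs_R0, rpow_0_l.
  - symmetry; now apply dot_eq0_r.
Qed.

Lemma dualnorm_dot_le q m u d w : 0 < q -> is_dualnorm q m u d ->
  dot m u w <= d * lqnorm q m w.
Proof.
  intros Hq Hd; pose proof (dualnorm_nonneg _ _ _ _ Hd) as Hd0.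
  destruct (Rle_lt_or_eq_dec _ _ (lqnorm_nonneg q m w)) as [HL|HL].
  - set (L := lqnorm q m w) in *.
    assert (Hunit : dot m u (fun i => / L * w i) <= d).
    { apply (proj1 Hd); exists (fun i => / L * w i); split; [|reflexivity].
      rewrite lqnorm_scal by (auto using Rinv_0_lt_compat); fold L.
      rewrite Rinv_l by lra; lra. }
    rewrite dot_scalr in Hunit.
    replace (dot m u w) with (L * (/ L * dot m u w)) by (field; lra).
    rewrite (Rmult_comm d L); apply Rmult_le_compat_l; lra.
  - rewrite <- HL, dot_eq0_r by (apply (lqnorm_eq0 q); auto); lra.
Qed.

Lemma dualnorm_dot_vsub_le q m u d x y : 0 < q -> is_dualnorm q m u d ->
  dot m u (vsub x y) <= d * (lqnorm q m x + lqnorm q m y).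
Proof.
  intros Hq Hd.
  assert (Hsplit : dot m u (vsub x y) = dot m u x + dot m u (fun i => - y i)).
  { unfold dot, vsub; rewrite <- sumR_plus; apply sumR_ext; intros; ring. }
  pose proof (dualnorm_dot_le _ _ _ _ x Hq Hd).
  pose proof (dualnorm_dot_le _ _ _ _ (fun i => - y i) Hq Hd).
  rewrite lqnorm_opp in *; lra.
Qed.

Lemma tangent_ge_of_deriv_nonincreasing f f' x y :
  (forall z, 0 < z -> derivable_pt_lim f z (f' z)) ->
  (forall z z', 0 < z -> z <= z' -> f' z' <= f' z) ->
  0 < x -> 0 < y -> f y <= f x + f' x * (y - x).
Proof.
  intros Hder Hdec Hx Hy.
  destruct (Rtotal_order x y) as [Hxy|[<-|Hyx]]; [| lra |].
  - destruct (MVT_cor2 f f' x y Hxy) as (c & Hc & Hxc); [intros; apply Hder; lra|].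
    assert (f' c <= f' x) by (apply Hdec; lra).
    assert (f' c * (y - x) <= f' x * (y - x)) by (apply Rmult_le_compat_r; lra).
    lra.
  - destruct (MVT_cor2 f f' y x Hyx) as (c & Hc & Hyc); [intros; apply Hder; lra|].
    assert (f' x <= f' c) by (apply Hdec; lra).
    assert (f' x * (x - y) <= f' c * (x - y)) by (apply Rmult_le_compat_r; lra).
    lra.
Qed.

Lemma link_function_tangent_ge n g gp x y : link_function n g gp ->
  0 < x -> 0 <= y -> g y <= g x + gp x * (y - x).
Proof.
  intros (_ & _ & _ & Hinc & Hder & _ & Hgp & Hdec & _) Hx Hy.
  destruct (Rle_lt_or_eq_dec _ _ Hy) as [Hy0|<-].
  - now apply tangent_ge_of_deriv_nonincreasing.
  - (* [g 0 < g y'] for every [y' > 0], and [y'] can be taken arbitrarily small *)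
    apply Rle_plus_epsilon; intros e He.
    pose proof (Hgp x Hx).
    assert (Hy' : 0 < e / gp x) by (apply Rdiv_lt_0_compat; lra).
    pose proof (Hinc 0 _ (Rle_refl 0) Hy').
    pose proof (tangent_ge_of_deriv_nonincreasing g gp x _ Hder Hdec Hx Hy').
    replace (gp x * (e / gp x - x)) with (e + gp x * (0 - x)) in * by (field; lra).
    lra.
Qed.

Section OracleInequality.

Variables (n p k : nat) (X : mat) (betastar eps Y : vec) (g gp : R -> R)
  (M Mp P : nat -> mat) (q lambar d : nat -> R) (betabar : vec).

Hypothesis HY : veq n Y (fun i => mv p X betastar i + eps i).
Hypothesis Hg : link_function n g gp.
Hypothesis Hq : forall j, (j < k)%nat -> 0 < q j.
Hypothesis HPsum :
  meq p p (fun a b => sumR k (fun j => mm p (mm p (P j) (Mp j)) (M j) a b)) idmat.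
Hypothesis Hd : forall j, (j < k)%nat ->
  is_dualnorm (q j) p (noisevec n p X (P j) (Mp j) eps) (d j).

Let rss (b : vec) : R := sqnorm n (vsub Y (mv p X b)).
Let pen (j : nat) (b : vec) : R := lqnorm (q j) p (mv p (M j) b).

Hypothesis Hmin : forall b : vec,
  objective n p k g X Y M q lambar betabar <= objective n p k g X Y M q lambar b.
Hypothesis Hres : 0 < rss betabar.
Hypothesis Htune : forall j, (j < k)%nat -> lambar j / (2 * gp (rss betabar)) = d j.

Lemma rss_gap_le beta :
  rss betabar - rss beta <= 2 * sumR k (fun j => d j * (pen j beta - pen j betabar)).
Proof.
  assert (Hgp : 0 < gp (rss betabar)) by (destruct Hg as (_&_&_&_&_&_&Hgp&_); auto).
  pose proof (Hmin beta) as Hopt; unfold objective in Hopt.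
  pose proof (link_function_tangent_ge n g gp _ (rss beta) Hg Hres (sqnorm_nonneg _ _)).
  assert (Hpen : sumR k (fun j => lambar j * pen j beta) - sumR k (fun j => lambar j * pen j betabar)
                 = gp (rss betabar) * (2 * sumR k (fun j => d j * (pen j beta - pen j betabar)))).
  { rewrite <- sumR_minus, <- !sumR_scal; apply sumR_ext; intros j Hj.
    rewrite <- (Htune j Hj); field; lra. }
  apply (Rmult_le_reg_l (gp (rss betabar))); [assumption|].
  unfold rss, pen in *; lra.
Qed.

Lemma rss_expand b : rss b
  = sqnorm n eps + 2 * dot n eps (mv p X (vsub betastar b)) + sqnorm n (mv p X (vsub betastar b)).
Proof.
  rewrite <- sqnorm_add; apply sumR_ext; intros i Hi.
  rewrite mv_vsub; unfold vsub; rewrite HY by assumption; f_equal; ring.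
Qed.

Lemma noise_cross_le beta :
  dot n eps (mv p X (vsub betastar beta)) - dot n eps (mv p X (vsub betastar betabar))
  <= sumR k (fun j => d j * (pen j betabar + pen j beta)).
Proof.
  replace (_ - _) with (dot n eps (mv p X (vsub betabar beta))).
  2:{ unfold dot; rewrite <- sumR_minus; apply sumR_ext; intros.
      rewrite !mv_vsub; ring. }
  rewrite (dot_noisevec_decomp n p k X M Mp P eps _ HPsum).
  apply sumR_le; intros j Hj.
  rewrite (dot_ext p _ _ (vsub (mv p (M j) betabar) (mv p (M j) beta)))
    by (intros a _; apply mv_vsub).
  apply dualnorm_dot_vsub_le; auto.
Qed.

Lemma prediction_error_le beta :
  sqnorm n (mv p X (vsub betastar betabar))
  <= sqnorm n (mv p X (vsub betastar beta)) + 4 * sumR k (fun j => d j * pen j beta).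
Proof.
  pose proof (rss_gap_le beta) as Hgap.
  pose proof (noise_cross_le beta) as Hcross.
  rewrite !rss_expand in Hgap.
  assert (Hsum : sumR k (fun j => d j * (pen j beta - pen j betabar))
                 + sumR k (fun j => d j * (pen j betabar + pen j beta))
                 = 2 * sumR k (fun j => d j * pen j beta)).
  { rewrite <- sumR_plus, <- sumR_scal; apply sumR_ext; intros; ring. }
  lra.
Qed.

End OracleInequality.

Theorem mainTheorem6
  (n p k : nat) (X : mat) (betastar eps Y : vec)
  (g gp : R -> R) (M Mp P : nat -> mat) (q : nat -> R)
  (lambar : nat -> R) (betabar : vec) (d : nat -> R)
  (HY : veq n Y (fun i => mv p X betastar i + eps i))
  (Hg : link_function n g gp)
  (Hk : (1 <= k)%nat)
  (Hker : forall b : vec,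
      (forall j, (j < k)%nat -> veq p (mv p (M j) b) (fun _ => 0)) ->
      veq p b (fun _ => 0))
  (Hq : forall j, (j < k)%nat -> 1 <= q j)
  (HMp : forall j, (j < k)%nat -> is_pinv p (M j) (Mp j))
  (HP : forall j, (j < k)%nat -> is_projection p (P j))
  (HPsum : meq p p (fun a b => sumR k (fun j => mm p (mm p (P j) (Mp j)) (M j) a b)) idmat)
  (Hd : forall j, (j < k)%nat -> is_dualnorm (q j) p (noisevec n p X (P j) (Mp j) eps) (d j))
  (HYnz : exists i, (i < n)%nat /\ Y i <> 0)
  (Hdpos : forall j, (j < k)%nat -> 0 < d j)
  (Hlam : forall j, (j < k)%nat -> 0 < lambar j)
  (Hmin : forall b : vec,
      objective n p k g X Y M q lambar betabar <= objective n p k g X Y M q lambar b)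
  (Hres : 0 < sqnorm n (vsub Y (mv p X betabar)))
  (Htune : forall j, (j < k)%nat ->
      lambar j / (2 * gp (sqnorm n (vsub Y (mv p X betabar)))) = d j) :
  forall beta : vec,
    / INR n * sqnorm n (mv p X (vsub betastar betabar))
    <= / INR n * sqnorm n (mv p X (vsub betastar beta))
       + 4 / INR n * sumR k (fun j => d j * lqnorm (q j) p (mv p (M j) beta)).
Proof.
  intros beta.
  assert (Hqpos : forall j, (j < k)%nat -> 0 < q j) by (intros j Hj; specialize (Hq j Hj); lra).
  pose proof (prediction_error_le n p k X betastar eps Y g gp M Mp P q lambar d betabar
                HY Hg Hqpos HPsum Hd Hmin Hres Htune beta) as Hpred.
  assert (Hn : 0 < / INR n).
  { destruct HYnz as (i & Hi & _); apply Rinv_0_lt_compat, lt_0_INR; lia. }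
  unfold Rdiv; apply (Rmult_le_compat_l (/ INR n)) in Hpred; lra.
Qed.
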